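(* Let $\delta_W,\delta_X,\delta_Y,\delta_Z\in\mathbb{Z}$ with $\delta_W+\delta_X+\delta_Y+\delta_Z\ne 0$, and let $\ell=\max(|\delta_W|,|\delta_X|,|\delta_Y|,|\delta_Z|)$. Consider four tests $A,B,C,D$ (rows, in this order) and four persons $W,X,Y,Z$ (columns) and the $4\times 4$ schedule matrix $S$ defined as follows. Each person occupies exactly two tests: $X$ is in $A$ and $B$, $Y$ is in $B$ and $C$, $Z$ is in $C$ and $D$, $W$ is in $D$ and $A$; all other entries are $\infty$. For a person $P$ occupying the ordered pair of tests $(U,V)\in\{(A,B),(B,C),(C,D),(D,A)\}$ (for $P=X,Y,Z,W$ respectively), set $S_{U,P}=\max(0,-\delta_P)$ and $S_{V,P}=\max(0,\delta_P)$ (so that $S_{V,P}-S_{U,P}=\delta_P$). Then $S$ is a $(4,4,2)$-tropical code within maximum delay $\ell$.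
   Context: Tropical arithmetic on $\mathbb{R}\cup\{\infty\}$: $x\oplus y=\min(x,y)$, $x\odot y=x+y$, with $x\oplus\infty=x$ and $x\odot\infty=\infty$. For a matrix $S$ with $T$ rows and $N$ columns and a column vector $\mathbf{x}$ of length $N$, $S\odot\mathbf{x}$ is the vector whose $t$-th entry is $\min_{j}(S_{tj}+x_j)$. A $(T,N,D)$-tropical code is a matrix $S\in(\{0\}\cup\mathbb{N}\cup\{\infty\})^{T\times N}$ such that for any two distinct vectors $\mathbf{x},\mathbf{y}\in(\{0\}\cup\mathbb{N}\cup\{\infty\})^{N}$, each having at most $D$ finite entries, $S\odot\mathbf{x}\ne S\odot\mathbf{y}$. It is within maximum delay $\ell$ if $S\in\{0,1,\dots,\ell,\infty\}^{T\times N}$. *)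

From mathcomp Require Import all_boot all_order all_algebra.
Set Implicit Arguments. Unset Strict Implicit. Unset Printing Implicit Defensive.
Import Order.TTheory GRing.Theory Num.Theory.

(* Tropical values {0} ∪ N ∪ {∞}: [Some n] is the finite value n, [None] is ∞. *)
Definition tval := option nat.

Definition tmul (x y : tval) : tval :=
  match x, y with Some a, Some b => Some (a + b)%N | _, _ => None end.

Definition tadd (x y : tval) : tval :=
  match x, y with
  | Some a, Some b => Some (minn a b)
  | Some a, None => Some a
  | None, _ => y
  end.

Definition tmulmx (T N : nat) (S : 'M[tval]_(T, N)) (x : {ffun 'I_N -> tval})
  : {ffun 'I_T -> tval} :=
  [ffun t => foldr tadd None [seq tmul (S t j) (x j) | j <- enum 'I_N]].

Definition nfinite (N : nat) (x : {ffun 'I_N -> tval}) : nat :=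
  #|[pred j | x j != None]|.

Definition tropical_code (T N D : nat) (S : 'M[tval]_(T, N)) : Prop :=
  forall x y : {ffun 'I_N -> tval},
    (nfinite x <= D)%N -> (nfinite y <= D)%N -> x != y ->
    tmulmx S x != tmulmx S y.

Definition within_delay (T N : nat) (S : 'M[tval]_(T, N)) (l : nat) : Prop :=
  forall i j, match S i j with Some a => (a <= l)%N | None => true end.

Definition posp (d : int) : nat := absz (Num.max 0%R d).

(* Rows A,B,C,D = 0,1,2,3; columns W,X,Y,Z = 0,1,2,3.
   X occupies (A,B), Y (B,C), Z (C,D), W (D,A); for pair (U,V) of person P:
   S_{U,P} = max(0,-dP), S_{V,P} = max(0,dP). *)
Definition schedule4 (dW dX dY dZ : int) : 'M[tval]_(4, 4) :=
  \matrix_(i < 4, j < 4)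
    match nat_of_ord i, nat_of_ord j with
    | 0, 0 => Some (posp dW)
    | 3, 0 => Some (posp (- dW)%R)
    | 0, 1 => Some (posp (- dX)%R)
    | 1, 1 => Some (posp dX)
    | 1, 2 => Some (posp (- dY)%R)
    | 2, 2 => Some (posp dY)
    | 2, 3 => Some (posp (- dZ)%R)
    | 3, 3 => Some (posp dZ)
    | _, _ => None
    end.

(* A person occupies two consecutive tests of the cycle A-B-C-D, so an outcome is
   infinite exactly when both persons of its test are.  For vectors with at most two
   finite entries this pattern of infinite outcomes determines the support, except
   that the two diagonal supports {W, Y} and {X, Z} both make every outcome finite.
   If the supports agree, every finite person shares one of its tests with an
   infinite person only, and that outcome yields its value.  In the diagonal case the
   alternating sum r_A - r_B + r_C - r_D of the outcomes is dW + dY for one diagonal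
   and -(dX + dZ) for the other, so they coincide only if dW + dX + dY + dZ = 0. *)

From mathcomp Require Import all_boot all_order all_algebra zify.
Import Order.TTheory GRing.Theory Num.Theory.
Set Implicit Arguments.
Unset Strict Implicit.
Unset Printing Implicit Defensive.

Lemma taddC : commutative tadd.
Proof. by case=> [a|] [b|] //=; rewrite minnC. Qed.

Lemma taddNone : right_id None tadd.
Proof. by case. Qed.

Lemma tadd_eqNone x y : (tadd x y == None) = (x == None) && (y == None).
Proof. by case: x y => [a|] [b|]. Qed.

Lemma tmul_eqNone a x : (tmul (Some a) x == None) = (x == None).
Proof. by case: x. Qed.

Lemma tmulI a : injective (tmul (Some a)).
Proof. by case=> [b|] [c|] //= [/addnI ->]. Qed.

Lemma enum_ord4 : enum 'I_4 = [:: 0; 1; 2; 3]%R.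
Proof. by apply: (inj_map val_inj); rewrite val_enum_ord. Qed.

Lemma forall_ord4 (P : 'I_4 -> Prop) : P 0%R -> P 1%R -> P 2%R -> P 3%R -> forall i, P i.
Proof.
by move=> P0 P1 P2 P3 [[|[|[|[|k]]]] lt_k4] //;
  [move: P0 | move: P1 | move: P2 | move: P3]; congr P; apply: val_inj.
Qed.

Lemma card_ord4 (a : pred 'I_4) : #|a| = (a 0%R + a 1%R + a 2%R + a 3%R)%N.
Proof.
rewrite cardE /enum_mem -enumT enum_ord4 /= !unfold_in.
by case: (a 0%R); case: (a 1%R); case: (a 2%R); case: (a 3%R).
Qed.

Local Open Scope ring_scope.

Lemma ord4E :
  ((0 + 1 = 1 :> 'I_4)%R * (1 + 1 = 2 :> 'I_4)%R * (2 + 1 = 3 :> 'I_4)%R * (3 + 1 = 0 :> 'I_4)%R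
   * (0 - 1 = 3 :> 'I_4)%R * (1 - 1 = 0 :> 'I_4)%R * (2 - 1 = 1 :> 'I_4)%R * (3 - 1 = 2 :> 'I_4)%R)%type.
Proof. by do !split; apply/eqP. Qed.

Definition cycle4 (u v : 'I_4 -> nat) : 'M[option nat]_4 :=
  \matrix_(i, j) if j == i then Some (v j) else if j == i + 1 then Some (u j) else None.

Lemma tmulmx_cycle4 u v x i :
  tmulmx (cycle4 u v) x i = tadd (tmul (Some (v i)) (x i)) (tmul (Some (u (i + 1))) (x (i + 1))).
Proof.
rewrite /tmulmx ffunE enum_ord4 /=.
by elim/forall_ord4: i; rewrite !mxE !ord4E /= ?taddNone // taddC.
Qed.

Lemma cycle4_row_finite u v x i :
  (tmulmx (cycle4 u v) x i != None) = (x i != None) || (x (i + 1) != None).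
Proof. by rewrite tmulmx_cycle4 tadd_eqNone !tmul_eqNone negb_and. Qed.

Lemma cycle4_support (a c : pred 'I_4) :
  (#|a| <= 2)%N -> (#|c| <= 2)%N ->
  (forall i, a i || a (i + 1) = c i || c (i + 1)) ->
  [\/ a =1 c, a =1 (fun i => ~~ odd i) /\ c =1 odd | a =1 odd /\ c =1 (fun i => ~~ odd i)].
Proof.
move=> ha hc cov; move: ha hc (cov 0) (cov 1) (cov 2) (cov 3).
rewrite !card_ord4 !ord4E => ha hc cov0 cov1 cov2 cov3.
pose eq4 (f g : pred 'I_4) := [&& f 0 == g 0, f 1 == g 1, f 2 == g 2 & f 3 == g 3].
have eq4P f g : eq4 f g -> f =1 g.
  by case/and4P=> /eqP ? /eqP ? /eqP ? /eqP ?; apply: forall_ord4.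
suff : [|| eq4 a c, eq4 a (fun i => ~~ odd i) && eq4 c odd
         | eq4 a odd && eq4 c (fun i => ~~ odd i)].
  case/or3P=> [/eq4P | /andP[/eq4P ? /eq4P ?] | /andP[/eq4P ? /eq4P ?]].
  - by constructor 1.
  - by constructor 2.
  - by constructor 3.
move: ha hc cov0 cov1 cov2 cov3; rewrite /eq4 /=.
by case: (a 0) (a 1) (a 2) (a 3) (c 0) (c 1) (c 2) (c 3) => [] [] [] [] [] [] [] [].
Qed.

Lemma cycle4_free_neighbour (a : pred 'I_4) i :
  (#|a| <= 2)%N -> a i -> ~~ a (i + 1) || ~~ a (i - 1).
Proof.
rewrite card_ord4; elim/forall_ord4: i; rewrite !ord4E.
all: by case: (a 0) (a 1) (a 2) (a 3) => [] [] [] [].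
Qed.

Lemma cycle4_same_support u v (x y : {ffun 'I_4 -> option nat}) :
  (nfinite x <= 2)%N -> (forall i, (x i != None) = (y i != None)) ->
  tmulmx (cycle4 u v) x = tmulmx (cycle4 u v) y -> x = y.
Proof.
move=> hx supp exy; apply/ffunP => i.
have row (j : 'I_4) := congr1 (fun r : {ffun _} => r j) exy.
have outside j : x j = None -> y j = None.
  by move=> xj; apply/eqP; rewrite -[_ == _]negbK -supp xj.
case: (eqVneq (x i) None) => [xi | xi]; first by rewrite xi outside.
case/orP: (cycle4_free_neighbour hx xi) => /negPn/eqP out.
- by move: (row i); rewrite !tmulmx_cycle4 out (outside _ out) !taddNone => /tmulI.
- by move: (row (i - 1)); rewrite !tmulmx_cycle4 subrK out (outside _ out) => /tmulI.
Qed.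

Lemma sum_ord4 (V : nmodType) (F : 'I_4 -> V) : \sum_i F i = F 0 + F 1 + F 2 + F 3.
Proof. by rewrite -big_enum enum_ord4 !big_cons big_nil /= addr0 !addrA. Qed.

Lemma cycle4_alternating u v (x y : {ffun 'I_4 -> option nat}) :
  \sum_i ((v i)%:Z - (u i)%:Z) != 0 ->
  (forall i, (x i != None) = ~~ odd i) -> (forall i, (y i != None) = odd i) ->
  tmulmx (cycle4 u v) x != tmulmx (cycle4 u v) y.
Proof.
move=> hsum ex ey; apply: contra hsum => /eqP exy.
have row (i : 'I_4) := congr1 (fun r : {ffun _} => r i) exy.
move: (row 0) (row 1) (row 2) (row 3) (ex 0) (ex 1) (ex 2) (ex 3) (ey 0) (ey 1) (ey 2) (ey 3).
rewrite !tmulmx_cycle4 !ord4E sum_ord4 /=.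
case: (x 0) (x 1) (x 2) (x 3) (y 0) (y 1) (y 2) (y 3) => [p0|] [?|] [p2|] [?|] [?|] [q1|] [?|] [q3|] //=.
move=> [e0] [e1] [e2] [e3] *; apply/eqP; lia.
Qed.

Lemma cycle4_code u v : \sum_i ((v i)%:Z - (u i)%:Z) != 0 -> tropical_code 2 (cycle4 u v).
Proof.
move=> hsum x y hx hy; apply: contraNN => /eqP exy; apply/eqP.
have cover i : (x i != None) || (x (i + 1) != None) = (y i != None) || (y (i + 1) != None).
  by rewrite -!(cycle4_row_finite u v) exy.
case: (cycle4_support hx hy cover) => [same | [ex ey] | [ex ey]].
- exact: cycle4_same_support hx same exy.
- by move: (cycle4_alternating hsum ex ey); rewrite exy eqxx.
- by move: (cycle4_alternating hsum ey ex); rewrite exy eqxx.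
Qed.

Lemma cycle4_within_delay u v l :
  (forall j, u j <= l /\ v j <= l)%N -> within_delay (cycle4 u v) l.
Proof. by move=> uv_le i j; rewrite mxE; case: (uv_le j) => uj vj; case: ifP => _ //; case: ifP. Qed.

Lemma posp_subN d : (posp d)%:Z - (posp (- d))%:Z = d.
Proof. by rewrite /posp !gez0_abs ?le_max ?lexx //; case: (leP 0 d) => hd; lia. Qed.

Lemma posp_le_abs d : (posp d <= `|d|)%N.
Proof. rewrite /posp; case: (leP 0 d) => hd; lia. Qed.

Definition delta4 (dW dX dY dZ : int) (j : 'I_4) : int := nth 0 [:: dW; dX; dY; dZ] j.

Lemma schedule4E dW dX dY dZ :
  schedule4 dW dX dY dZ =
  cycle4 (fun j => posp (- delta4 dW dX dY dZ j)) (fun j => posp (delta4 dW dX dY dZ j)).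
Proof. by apply/matrixP => i j; rewrite !mxE; elim/forall_ord4: i; elim/forall_ord4: j. Qed.

Theorem mainTheorem4 (dW dX dY dZ : int) :
  (dW + dX + dY + dZ != 0)%R ->
  let l := maxn (maxn `|dW|%N `|dX|%N) (maxn `|dY|%N `|dZ|%N) in
  tropical_code 2 (schedule4 dW dX dY dZ) /\ within_delay (schedule4 dW dX dY dZ) l.
Proof.
move=> hsum l; rewrite schedule4E; split.
  apply: cycle4_code.
  by rewrite (eq_bigr _ (fun j _ => posp_subN _)) sum_ord4.
apply: cycle4_within_delay => j.
have d_le : (`|delta4 dW dX dY dZ j| <= l)%N.
  by rewrite /l; elim/forall_ord4: j; rewrite /= !leq_max leqnn ?orbT.
by split; apply: leq_trans (posp_le_abs _) _; rewrite ?abszN.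
Qed.
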